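(* Let $C\subseteq\{0,1\}^n$ be a linear code with dual distance $\Gamma$ and $|C|\leq 2^{\frac{1}{64}n}$, let $\epsilon<1/8$, let $C'\subseteq C$, and fix a non-adaptive $\epsilon$-tester $(\{Q_i\}_{i\in I},\{\pi_i\}_{i\in I},\mu)$ for $C'$-partial testing of $C$ with query complexity $q$. Let $J\subseteq[n]$ with $|J|\leq n/2$. Then with probability at least $1/9$ over $i\sim\mu$, the query set $Q_i$ is a $J$-discerning set.
   Context: $[n]=\{1,\dots,n\}$; for $x\in\{0,1\}^n$ and $J\subseteq[n]$, $x[J]=(x_j)_{j\in J}$. A linear code is an $\mathbb{F}_2$-subspace of $\{0,1\}^n$; its dual distance is the minimum weight of a nonzero vector of its dual code. Distance is normalized Hamming distance, $d(x,C)=\min_{c\in C}|\{i:x_i\neq c_i\}|/n$. A non-adaptive $\epsilon$-tester for $C'$-partial testing of $C$ with query complexity $q$ consists of query sets $Q_i\subseteq[n]$ of size $q$ ($i\in I$), predicates $\pi_i:\{0,1\}^{Q_i}\to\{0,1\}$, and a probability distribution $\mu$ on $I$, such that for every $x\in C'$, $\Pr_{i\sim\mu}[\pi_i(x[Q_i])=1]\geq 2/3$, and for every $x$ with $d(x,C)>\epsilon$, $\Pr_{i\sim\mu}[\pi_i(x[Q_i])=0]\geq 2/3$. $U(C')$ is the uniform distribution on $C'$, $U(C')[Q]$ the distribution of $X[Q]$ for $X\sim U(C')$, and $U_J(C')$ the distribution obtained by drawing $x\sim U(C')$ and replacing $x[[n]\setminus J]$ by an independent uniformly random vector; $U_J(C')[Q]$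 is its restriction to $Q$. For $J$ with $|J|\leq n/2$, $Q_i$ is $J$-discerning if $d_{TV}(U(C')[Q_i],U_J(C')[Q_i])\geq 1/8$, where $d_{TV}(p,q)=\frac12\sum_a|p(a)-q(a)|$. *)

From HB Require Import structures.
From mathcomp Require Import all_boot all_order all_algebra.
From mathcomp Require Import boolp reals.
Set Implicit Arguments. Unset Strict Implicit. Unset Printing Implicit Defensive.
Import Order.TTheory GRing.Theory Num.Theory.
Local Open Scope ring_scope.

Definition word (n : nat) := {ffun 'I_n -> bool}.

(* a linear code: an F_2-subspace (contains 0, closed under addition = xor;
   scalar multiplication by 0/1 is then automatic) *)
Definition linear_code (n : nat) (C : {set word n}) : Prop :=
  [ffun => false] \in C /\
  forall x y, x \in C -> y \in C -> [ffun i => x i (+) y i] \in C.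

Definition wt (n : nat) (x : word n) : nat := #|[set i | x i]|.
Definition dotF2 (n : nat) (x y : word n) : bool := odd #|[set i | x i && y i]|.

Definition dual_code (n : nat) (C : {set word n}) : {set word n} :=
  [set y | [forall x in C, ~~ dotF2 x y]].

Definition dual_distance (n : nat) (C : {set word n}) (Gamma : nat) : Prop :=
  (exists2 y, y \in dual_code C & (y != [ffun => false]) /\ wt y = Gamma) /\
  (forall y, y \in dual_code C -> y != [ffun => false] -> (Gamma <= wt y)%N).

Definition hamming (n : nat) (x y : word n) : nat := #|[set i | x i != y i]|.

(* normalized distance d(x,C) = min_{c in C} hamming(x,c) / n
   (the default n of the min is never smaller than an actual hamming distance) *)
Definition dist (R : realType) (n : nat) (x : word n) (C : {set word n}) : R :=
  (\big[minn/n]_(c in C) hamming x c)%:R / n%:R.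

Definition subword (n : nat) (Q : {set 'I_n}) := {ffun {j : 'I_n | j \in Q} -> bool}.
Definition restrict (n : nat) (Q : {set 'I_n}) (x : word n) : subword Q :=
  [ffun j => x (val j)].

Definition U_restr (R : realType) (n : nat) (C' : {set word n}) (Q : {set 'I_n})
  (a : subword Q) : R :=
  #|[set x in C' | restrict Q x == a]|%:R / #|C'|%:R.

Definition merge (n : nat) (J : {set 'I_n}) (x z : word n) : word n :=
  [ffun j => if j \in J then x j else z j].

(* U_J(C')[Q] : x ~ U(C'), z ~ uniform on {0,1}^n independently *)
Definition UJ_restr (R : realType) (n : nat) (C' : {set word n}) (J Q : {set 'I_n})
  (a : subword Q) : R :=
  #|[set xz : word n * word n | (xz.1 \in C') && (restrict Q (merge J xz.1 xz.2) == a)]|%:R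
  / (#|C'| * 2 ^ n)%:R.

Definition dTV (R : realType) (T : finType) (p p' : T -> R) : R :=
  2^-1 * \sum_(a : T) `|p a - p' a|.

Definition discerning (R : realType) (n : nat) (C' : {set word n}) (J Q : {set 'I_n}) : Prop :=
  dTV (@U_restr R n C' Q) (@UJ_restr R n C' J Q) >= 8^-1.

Definition is_distr (R : realType) (I : finType) (mu : I -> R) : Prop :=
  (forall i, 0 <= mu i) /\ \sum_(i : I) mu i = 1.

Definition partial_tester (R : realType) (n : nat) (C C' : {set word n}) (eps : R)
  (q : nat) (I : finType) (Q : I -> {set 'I_n})
  (pi : forall i : I, subword (Q i) -> bool) (mu : I -> R) : Prop :=
  is_distr mu /\
  (forall i, #|Q i| = q) /\
  (forall x, x \in C' -> \sum_(i | pi i (restrict (Q i) x)) mu i >= 2 / 3) /\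
  (forall x : word n, dist R x C > eps ->
     \sum_(i | ~~ pi i (restrict (Q i) x)) mu i >= 2 / 3).

(* Draw x uniformly from C' and z uniformly from {0,1}^n, and let y agree with x
   on J and with z elsewhere, so that y ~ U_J(C').  A fixed codeword is
   (1/8)-close to y with probability at most (2/3)^m 3^(n/8), where m = n - |J|
   >= n/2 (exponential moment of the agreements outside J), so by the union bound
   over the at most 2^(n/64) codewords y is eps-far from C except with
   probability 1/6 once n >= 64.  The tester therefore accepts U(C') with mean
   probability >= 2/3 and U_J(C') with mean probability <= 1/3 + 2/3 * 1/6.  The
   acceptance gap of Q_i is at most d_TV(U(C')[Q_i], U_J(C')[Q_i]) and at most 1,
   and has mean >= 2/9 over i ~ mu; a reverse Markov inequality gives mass >= 1/9
   to the gaps >= 1/8.  For n < 64 the size bound forces C = {0}: every Q_i not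
   contained in J is then discerning, and every other Q_i cannot tell 0 from the
   indicator of the complement of J, which is far from C. *)

From Pilot Require Import Defs.
From HB Require Import structures.
From mathcomp Require Import all_boot all_order all_algebra.
From mathcomp Require Import boolp reals zify ring lra.
Import Order.TTheory GRing.Theory Num.Theory.

Section WordCounting.
Variable n : nat.
Implicit Types (x z c : word n) (J K : {set 'I_n}).

Lemma card_word : #|{: word n}| = 2 ^ n.
Proof. by rewrite card_ffun card_bool card_ord. Qed.

Lemma sum_prod_word (f : 'I_n -> bool -> nat) :
  \sum_(z : word n) \prod_(j < n) f j (z j) = \prod_(j < n) (f j true + f j false).
Proof.
rewrite -bigA_distr_bigA /=.
by apply: eq_bigr => j _; rewrite big_bool.
Qed.

Lemma card_coord_false (j0 : 'I_n) : #|[set z : word n | ~~ z j0]| * 2 = 2 ^ n.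
Proof.
pose f j (b : bool) := if j == j0 then nat_of_bool (~~ b) else 1.
have -> : #|[set z : word n | ~~ z j0]| = \sum_(z : word n) \prod_(j < n) f j (z j).
  rewrite -sum1dep_card big_mkcond; apply: eq_bigr => z _.
  by rewrite (bigD1 j0) //= /f eqxx big1 ?muln1 => [|j /negbTE ->]; case: (z j0).
rewrite sum_prod_word (bigD1 j0) //= /f eqxx mul1n.
rewrite (eq_bigr (fun _ => 2)) => [|j /negbTE -> //].
rewrite prod_nat_const cardC1 card_ord -expnSr.
by case: n j0 f => [[]|].
Qed.

(* Weight each word by 3 to the number of its agreements with c on K. *)
Lemma card_few_disagreements K c k :
  #|[set z : word n | #|[set j in K | z j != c j]| <= k]| * 3 ^ (#|K| - k)
  <= 2 ^ #|~: K| * 4 ^ #|K|.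
Proof.
pose f j (b : bool) := if (j \in K) && (b == c j) then 3 else 1.
have total : \sum_(z : word n) \prod_(j < n) f j (z j) = 2 ^ #|~: K| * 4 ^ #|K|.
  rewrite sum_prod_word (bigID (mem K)) /=.
  rewrite (eq_bigr (fun _ => 4)) => [|j jK]; last by rewrite /f jK; case: (c j).
  rewrite [X in _ * X](eq_bigr (fun _ => 2)) => [|j /negbTE jK]; last by rewrite /f jK.
  rewrite !prod_nat_const mulnC; congr (2 ^ _ * _).
  by apply: eq_card => j; rewrite inE.
rewrite -total -sum_nat_cond_const.
rewrite [X in _ <= X](bigID (fun z => #|[set j in K | z j != c j]| <= k)) /=.
apply: leq_trans (leq_addr _ _); apply: leq_sum => z few.
have -> : \prod_(j < n) f j (z j) = 3 ^ #|[set j in K | z j == c j]|.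
  by rewrite -prod_nat_const [RHS]big_mkcond; apply: eq_bigr => j _; rewrite /f inE.
rewrite leq_pexp2l //.
have := cardsID [set j | z j == c j] K.
have -> : K :&: [set j | z j == c j] = [set j in K | z j == c j].
  by apply/setP => j; rewrite !inE.
have -> : K :\: [set j | z j == c j] = [set j in K | z j != c j].
  by apply/setP => j; rewrite !inE andbC.
move: few; set a := #|_|; set d := #|_|; move=> few <-; lia.
Qed.

Lemma card_merge_near J x c :
  #|[set z | 8 * hamming (Defs.merge J x z) c < n]| * 3 ^ (#|~: J| - n %/ 8)
  <= 2 ^ #|J| * 4 ^ #|~: J|.
Proof.
have := card_few_disagreements (~: J) c (n %/ 8); rewrite setCK; apply: leq_trans.
rewrite leq_mul2r; apply/orP; right; apply/subset_leq_card/subsetP => z.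
rewrite !inE => near.
have le_ham : #|[set j in ~: J | z j != c j]| <= hamming (Defs.merge J x z) c.
  apply/subset_leq_card/subsetP => j; rewrite !inE /Defs.merge ffunE.
  by case/andP => /negbTE ->.
rewrite leq_divRL //; move: le_ham near; set a := #|_|; set h := hamming _ _; lia.
Qed.

End WordCounting.

Lemma card_bigcup_le (T I : finType) (A : {pred I}) (S : I -> {set T}) :
  #|\bigcup_(i in A) S i| <= \sum_(i in A) #|S i|.
Proof.
elim/big_ind2: _ => [|m1 U1 m2 U2 le1 le2|//]; first by rewrite cards0.
exact: leq_trans (leq_card_setU U1 U2).1 (leq_add le1 le2).
Qed.

Lemma pow_six_le_pow_three m : 20 <= m -> 6 ^ 64 * 2 ^ (66 * m) <= 3 ^ (48 * m).
Proof.
move=> m_ge20.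
have six64_le : 6 ^ 64 <= 2 ^ (10 * m).
  apply: (@leq_trans ((2 ^ 3) ^ 64)); first by rewrite leq_exp2r.
  rewrite -expnM leq_exp2l; [lia | by []].
apply: (@leq_trans (2 ^ (10 * m) * 2 ^ (66 * m))); first by rewrite leq_mul2r six64_le orbT.
rewrite -expnD (_ : 10 * m + 66 * m = 19 * (4 * m)); last by lia.
rewrite (_ : 48 * m = 12 * (4 * m)); last by lia.
rewrite (expnM 2 19) (expnM 3 12) leq_exp2r; last by lia.
by rewrite !expnS expn0; lia.
Qed.

Lemma six_card_le_pow_three s j m :
  s ^ 64 <= 2 ^ (j + m) -> j <= m -> 32 <= m ->
  6 * s * 2 ^ m <= 3 ^ (m - (j + m) %/ 8).
Proof.
move=> s64 jm m32.
rewrite -(@leq_exp2r _ _ 64); last by [].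
rewrite !expnMn -!expnM -mulnA.
apply: (@leq_trans (3 ^ (48 * m))); last by rewrite leq_exp2l; [lia | by []].
apply: (@leq_trans (6 ^ 64 * 2 ^ (66 * m))); last by apply: pow_six_le_pow_three; lia.
rewrite leq_mul2l; apply/orP; right.
apply: (@leq_trans (2 ^ (j + m) * 2 ^ (m * 64))); first by rewrite leq_mul2r s64 orbT.
by rewrite -expnD leq_exp2l; [lia | by []].
Qed.

Lemma six_card_merge_near n (C : {set word n}) (J : {set 'I_n}) (x c : word n) :
  #|C| ^ 64 <= 2 ^ n -> 2 * #|J| <= n -> 64 <= n ->
  6 * #|C| * #|[set z | 8 * hamming (Defs.merge J x z) c < n]| <= 2 ^ n.
Proof.
move=> C64 J_half n64.
have n_split : n = #|J| + #|~: J| by rewrite cardsC card_ord.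
have key : 6 * #|C| * 2 ^ #|~: J| <= 3 ^ (#|~: J| - n %/ 8).
  have := @six_card_le_pow_three #|C| #|J| #|~: J|; rewrite -n_split.
  by apply => //; lia.
rewrite -(@leq_pmul2r (3 ^ (#|~: J| - n %/ 8))) ?expn_gt0 // -mulnA.
apply: (@leq_trans (6 * #|C| * (2 ^ #|J| * 4 ^ #|~: J|))).
  by rewrite leq_mul2l card_merge_near orbT.
have -> : 2 ^ n = 2 ^ #|J| * 2 ^ #|~: J| by rewrite -expnD -n_split.
rewrite (_ : 4 = 2 * 2) // expnMn.
move: key; set a := 2 ^ #|J|; set b := 2 ^ #|~: J| => key.
rewrite (_ : 6 * #|C| * (a * (b * b)) = a * b * (6 * #|C| * b)); last by ring.
by rewrite leq_mul2l key orbT.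
Qed.

Lemma six_card_near_merges n (C : {set word n}) (J : {set 'I_n}) (x : word n) :
  0 < #|C| -> #|C| ^ 64 <= 2 ^ n -> 2 * #|J| <= n -> 64 <= n ->
  6 * #|\bigcup_(c in C) [set z | 8 * hamming (Defs.merge J x z) c < n]| <= 2 ^ n.
Proof.
move=> C_gt0 C64 J_half n64.
rewrite -(leq_pmul2l C_gt0) -[leqRHS]sum_nat_const.
apply: (@leq_trans (\sum_(c in C) 6 * #|C| * #|[set z | 8 * hamming (Defs.merge J x z) c < n]|)).
  by rewrite -big_distrr /= mulnCA mulnA leq_mul2l card_bigcup_le orbT.
by apply: leq_sum => c _; apply: six_card_merge_near.
Qed.

Lemma card_setX_dep {T1 T2 : finType} (A : {set T1}) (P : T1 -> T2 -> bool) :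
  #|[set u in setX A [set: T2] | P u.1 u.2]| = \sum_(x in A) #|[set y | P x y]|.
Proof.
under [RHS]eq_bigr => x _ do rewrite -sum1dep_card.
rewrite pair_big_dep -sum1dep_card; apply: eq_bigl => u.
by rewrite !inE andbT.
Qed.

Local Open Scope ring_scope.

Section Averages.
Context {R : realType}.
Definition avg {T : finType} (A : {set T}) (f : T -> R) : R := (\sum_(t in A) f t) / #|A|%:R.

Lemma avg_cst {T : finType} (A : {set T}) (c : R) : A != set0 -> avg A (fun=> c) = c.
Proof.
move=> /set0Pn A_ne0; rewrite /avg sumr_const -[c *+ _]mulr_natr mulfK //.
by rewrite pnatr_eq0 -lt0n card_gt0; apply/set0Pn.
Qed.

Lemma avg_le {T : finType} (A : {set T}) (f g : T -> R) :
  (forall t, t \in A -> f t <= g t) -> avg A f <= avg A g.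
Proof. by move=> le_fg; rewrite ler_wpM2r ?invr_ge0 ?ler0n // ler_sum. Qed.

Lemma avgD {T : finType} (A : {set T}) (f g : T -> R) :
  avg A (fun t => f t + g t) = avg A f + avg A g.
Proof. by rewrite /avg big_split mulrDl. Qed.

Lemma avgZ {T : finType} (A : {set T}) (c : R) (f : T -> R) :
  avg A (fun t => c * f t) = c * avg A f.
Proof. by rewrite /avg -mulr_sumr mulrA. Qed.

Lemma avg_indicator {T : finType} (A : {set T}) (P : pred T) :
  avg A (fun t => (P t)%:R) = #|[set t in A | P t]|%:R / #|A|%:R.
Proof.
rewrite /avg -sum1dep_card natr_sum big_mkcondr /=; congr (_ / _).
by apply: eq_bigr => t _; case: (P t).
Qed.

Lemma sum_mul_avg {I T : finType} (A : {set T}) (mu : I -> R) (F : I -> T -> R) :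
  \sum_i mu i * avg A (F i) = avg A (fun t => \sum_i mu i * F i t).
Proof.
rewrite /avg exchange_big mulr_suml; apply: eq_bigr => i _.
by rewrite mulrA mulr_sumr.
Qed.

Lemma sum_mul_fibre_avg {T U : finType} (A : {set T}) (r : T -> U) (w : U -> R) :
  \sum_(a : U) w a * (#|[set t in A | r t == a]|%:R / #|A|%:R)
  = avg A (fun t => w (r t)).
Proof.
rewrite /avg; under eq_bigr do rewrite mulrA; rewrite -mulr_suml; congr (_ / _).
transitivity (\sum_(a : U) \sum_(t in A | r t == a) w a).
  apply: eq_bigr => a _; rewrite -sum1dep_card natr_sum mulr_sumr.
  by apply: eq_bigr => t _; rewrite mulr1.
rewrite (exchange_big_dep (mem A)) /= => [|a t _ /andP[] //].
by apply: eq_bigr => t At; rewrite (big_pred1 (r t)) // => a; rewrite At eq_sym.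
Qed.

End Averages.

Section Distributions.
Context {R : realType} {I : finType} {mu : I -> R}.

Lemma sum_mul_indicator (b : pred I) : \sum_i mu i * (b i)%:R = \sum_(i | b i) mu i.
Proof. by rewrite [RHS]big_mkcond; apply: eq_bigr => i _; case: (b i); rewrite ?mulr1 ?mulr0. Qed.

Hypothesis mu_distr : is_distr mu.

Lemma mass_predC (P : pred I) : \sum_(i | ~~ P i) mu i = 1 - \sum_(i | P i) mu i.
Proof. by case: mu_distr => _ <-; rewrite [X in _ = X - _](bigID P) /= addrAC subrr add0r. Qed.

Lemma mass_ge0 (P : pred I) : 0 <= \sum_(i | P i) mu i.
Proof. by apply: sumr_ge0 => i _; case: mu_distr. Qed.

Lemma mean_le_threshold_mass (g : I -> R) (P : pred I) (t : R) :
  (forall i, g i <= 1) -> (forall i, ~~ P i -> g i <= t) ->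
  \sum_i mu i * g i <= t + (1 - t) * \sum_(i | P i) mu i.
Proof.
move=> g_le1 g_le_t; have [mu_ge0 _] := mu_distr.
have -> : t + (1 - t) * \sum_(i | P i) mu i
          = \sum_(i | P i) mu i + t * \sum_(i | ~~ P i) mu i.
  by rewrite mass_predC; ring.
rewrite (bigID P) /= mulr_sumr; apply: lerD; apply: ler_sum => i Pi.
  by rewrite -[leRHS]mulr1 ler_wpM2l.
by rewrite mulrC ler_wpM2r // g_le_t.
Qed.
End Distributions.

Lemma dTV_ge_test (R : realType) (T : finType) (p p' : T -> R) (t : pred T) :
  \sum_a p a = \sum_a p' a -> \sum_a (t a)%:R * (p a - p' a) <= dTV p p'.
Proof.
move=> same_mass; rewrite /dTV.
set s1 := \sum_a (t a)%:R * (p a - p' a).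
set s2 := \sum_a (~~ t a)%:R * (p a - p' a).
have s12 : s1 + s2 = 0.
  rewrite -big_split /= -[RHS](subrr (\sum_a p a)) {2}same_mass -sumrB.
  by apply: eq_bigr => a _; case: (t a); rewrite /= ?mul1r ?mul0r ?addr0 ?add0r.
have s12_le : s1 - s2 <= \sum_a `|p a - p' a|.
  rewrite -sumrB; apply: ler_sum => a _.
  by case: (t a); rewrite /= ?mul1r ?mul0r ?subr0 ?sub0r ?ler_norm // -normrN ler_norm.
lra.
Qed.

(* U_J(C') is the law of [merge J x z] for (x, z) uniform on this set. *)
Definition UJ_space {n : nat} (C' : {set word n}) : {set word n * word n} :=
  setX C' [set: word n].

Section Restrictions.
Context {R : realType} {n : nat} (C' : {set word n}) (J Q : {set 'I_n}).

Lemma sum_mul_U_restr (w : subword Q -> R) :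
  \sum_a w a * @U_restr R n C' Q a = avg C' (fun x => w (restrict Q x)).
Proof. exact: sum_mul_fibre_avg. Qed.

Lemma sum_mul_UJ_restr (w : subword Q -> R) :
  \sum_a w a * @UJ_restr R n C' J Q a
  = avg (UJ_space C') (fun xz => w (restrict Q (Defs.merge J xz.1 xz.2))).
Proof.
rewrite -sum_mul_fibre_avg; apply: eq_bigr => a _; congr (_ * (_ / _)).
  by congr _%:R; apply: eq_card => xz; rewrite !inE andbT.
by rewrite cardsX cardsT card_word.
Qed.

Hypothesis C'_ne0 : C' != set0.

Lemma UJ_space_ne0 : UJ_space C' != set0.
Proof.
case/set0Pn: C'_ne0 => x x_in; apply/set0Pn; exists (x, x).
by rewrite !inE x_in.
Qed.

Lemma test_gap_le_dTV (t : pred (subword Q)) :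
  avg C' (fun x => (t (restrict Q x))%:R)
  - avg (UJ_space C') (fun xz => (t (restrict Q (Defs.merge J xz.1 xz.2)))%:R)
  <= dTV (@U_restr R n C' Q) (@UJ_restr R n C' J Q).
Proof.
rewrite -(sum_mul_U_restr (fun a => (t a)%:R)) -(sum_mul_UJ_restr (fun a => (t a)%:R)) -sumrB.
under eq_bigr do rewrite -mulrBr.
apply: dTV_ge_test.
under eq_bigr do rewrite -[U_restr _ _ _]mul1r.
under [RHS]eq_bigr do rewrite -[UJ_restr _ _ _ _]mul1r.
by rewrite sum_mul_U_restr sum_mul_UJ_restr !avg_cst // UJ_space_ne0.
Qed.

End Restrictions.

Lemma discerning_zero_code (R : realType) n (J Q : {set 'I_n}) :
  ~~ (Q \subset J) -> @discerning R n [set [ffun => false]] J Q.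
Proof.
case/subsetPn => j0 Qj0 Jj0.
set C0 := [set [ffun => false] : word n].
have C0_ne0 : C0 != set0 by apply/set0Pn; exists [ffun => false]; rewrite inE.
pose t (s : subword Q) := s == restrict Q [ffun => false].
apply: le_trans (test_gap_le_dTV C0 J Q C0_ne0 t).
have accept0 : (1 : R) <= avg C0 (fun x => (t (restrict Q x))%:R).
  rewrite -[leLHS](avg_cst C0 (1 : R) C0_ne0); apply: avg_le => x.
  by rewrite inE => /eqP ->; rewrite /t eqxx.
have accept_noisy :
    avg (UJ_space C0) (fun xz => (t (restrict Q (Defs.merge J xz.1 xz.2)))%:R) <= (2^-1 : R).
  apply: le_trans (avg_le _ _ (fun xz : word n * word n => ((~~ xz.2 j0)%:R : R)) _) _.
    move=> [x z] _; rewrite /t /=; case: eqP => [same|_]; last by rewrite ler0n.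
    have := congr1 (fun s : subword Q => s (exist _ j0 Qj0)) same.
    by rewrite !ffunE /= (negbTE Jj0) => ->.
  rewrite avg_indicator (card_setX_dep C0 (fun _ (z : word n) => ~~ z j0)) big_set1.
  rewrite /UJ_space cardsX cards1 cardsT card_word mul1n -(card_coord_false _ j0) natrM.
  have c_gt0 : (0 < #|[set z : word n | ~~ z j0]|)%N.
    by apply/card_gt0P; exists [ffun => false]; rewrite inE ffunE.
  by rewrite invfM mulrA divff ?mul1r // pnatr_eq0 -lt0n.
lra.
Qed.


Lemma dist_ge_inv8 (R : realType) n (y : word n) (C : {set word n}) :
  (0 < n)%N -> (forall c, c \in C -> n <= 8 * hamming y c)%N -> 8^-1 <= dist R y C.
Proof.
move=> n_gt0 far.
have : (n <= 8 * \big[minn/n]_(c in C) hamming y c)%N.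
  elim/big_ind: _ => [|a b ha hb|c /far //]; first by rewrite leq_pmull.
  by rewrite /minn; case: ifP.
rewrite /dist ler_pdivlMr ?ltr0n // -(ler_nat R) natrM; lra.
Qed.

Lemma near_codeword_of_close {R : realType} {n} {y : word n} {C : {set word n}} {eps : R} :
  (0 < n)%N -> eps < 8^-1 -> ~~ (eps < dist R y C) ->
  exists2 c, c \in C & (8 * hamming y c < n)%N.
Proof.
move=> n_gt0 eps_lt; case: (pickP (fun c => (c \in C) && (8 * hamming y c < n)%N)).
  by move=> c /andP[Cc near] _; exists c.
move=> none /negP[]; apply: (lt_le_trans eps_lt); apply: dist_ge_inv8 => // c Cc.
by move: (none c); rewrite Cc ltnNge => /negbFE.
Qed.

Lemma six_card_close_merges {R : realType} {n} (C C' : {set word n}) (J : {set 'I_n})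
    (eps : R) :
  (0 < #|C|)%N -> (#|C| ^ 64 <= 2 ^ n)%N -> (2 * #|J| <= n)%N -> (64 <= n)%N ->
  eps < 8^-1 ->
  (6 * #|[set xz in UJ_space C' | ~~ (eps < dist R (Defs.merge J xz.1 xz.2) C)%R]|
   <= #|UJ_space C'|)%N.
Proof.
move=> C_gt0 C64 J_half n64 eps_lt.
rewrite (card_setX_dep C' (fun x z => ~~ (eps < dist R (Defs.merge J x z) C))).
rewrite cardsX cardsT card_word -sum_nat_const big_distrr /=.
apply: leq_sum => x _; apply: leq_trans _ (six_card_near_merges _ _ _ x C_gt0 C64 J_half n64).
rewrite leq_mul2l; apply/orP; right; apply/subset_leq_card/subsetP => z.
have n_gt0 : (0 < n)%N by lia.
rewrite inE => /(near_codeword_of_close n_gt0 eps_lt) [c Cc near].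
by apply/bigcupP; exists c; rewrite ?inE.
Qed.

Section Tester.
Context {R : realType} {n : nat} {C C' : {set word n}} {eps : R} {q : nat}.
Context {I : finType} {Q : I -> {set 'I_n} }.
Context { pi : forall i : I, subword (Q i) -> bool }.
Context {mu : I -> R} {J : {set 'I_n} }.
Hypothesis tester : @partial_tester R n C C' eps q I Q pi mu.

Let mu_distr : is_distr mu. Proof. by case: tester. Qed.

Lemma accept_mass_le (y : word n) :
  \sum_(i | pi i (restrict (Q i) y)) mu i <= 3^-1 + 2 / 3 * (~~ (eps < dist R y C))%:R.
Proof.
have [_ [_ [_ reject]]] := tester.
have := mass_predC mu_distr (fun i => pi i (restrict (Q i) y)).
have := mass_ge0 mu_distr (fun i => ~~ pi i (restrict (Q i) y)).
case: (boolP (eps < dist R y C)) => [/reject|_] /=; lra.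
Qed.

Let discerns i := `[< @discerning R n C' J (Q i) >].

Lemma mean_noisy_acceptance_le :
  (0 < #|C|)%N -> (#|C| ^ 64 <= 2 ^ n)%N -> (2 * #|J| <= n)%N -> (64 <= n)%N ->
  eps < 8^-1 -> C' != set0 ->
  \sum_i mu i * avg (UJ_space C')
    (fun xz => (pi i (restrict (Q i) (Defs.merge J xz.1 xz.2)))%:R) <= 4 / 9.
Proof.
move=> C_gt0 C64 J_half n64 eps_lt C'_ne0.
rewrite sum_mul_avg; apply: le_trans (avg_le _ _
  (fun xz => 3^-1 + 2 / 3 * (~~ (eps < dist R (Defs.merge J xz.1 xz.2) C))%:R) _) _.
  by move=> xz _; rewrite sum_mul_indicator accept_mass_le.
rewrite avgD avgZ avg_cst ?UJ_space_ne0 // avg_indicator.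
have := six_card_close_merges C C' J eps C_gt0 C64 J_half n64 eps_lt.
have : (0 < #|UJ_space C'|)%N by rewrite card_gt0 UJ_space_ne0.
rewrite -(ltr0n R) -(ler_nat R) natrM.
set N := (#|UJ_space C'|)%:R; set c := (#|_|)%:R => N_gt0 close.
have : c / N <= 6^-1 by rewrite ler_pdivrMr //; lra.
lra.
Qed.

Lemma discerning_mass_large_length :
  (0 < #|C|)%N -> (#|C| ^ 64 <= 2 ^ n)%N -> (2 * #|J| <= n)%N -> (64 <= n)%N ->
  eps < 8^-1 -> C' != set0 ->
  9^-1 <= \sum_(i | discerns i) mu i.
Proof.
move=> C_gt0 C64 J_half n64 eps_lt C'_ne0.
have [_ [_ [accept _]]] := tester.
pose accepts i (y : word n) : R := (pi i (restrict (Q i) y))%:R.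
pose a i := avg C' (accepts i).
pose b i := avg (UJ_space C') (fun xz => accepts i (Defs.merge J xz.1 xz.2)).
have mean_a : 2 / 3 <= \sum_i mu i * a i.
  rewrite sum_mul_avg -[leLHS](avg_cst C' (2 / 3 : R) C'_ne0); apply: avg_le => x Cx.
  by rewrite sum_mul_indicator accept.
have mean_b : \sum_i mu i * b i <= 4 / 9 by exact: mean_noisy_acceptance_le.
have gap_le1 i : a i - b i <= 1.
  have a_le1 : a i <= 1.
    rewrite -(avg_cst C' 1 C'_ne0); apply: avg_le => x _.
    by rewrite /accepts lern1 leq_b1.
  have b_ge0 : 0 <= b i.
    rewrite -(avg_cst (UJ_space C') 0 (UJ_space_ne0 C' C'_ne0)); apply: avg_le => xz _.
    exact: ler0n.
  lra.
have gap_small i : ~~ discerns i -> a i - b i <= 8^-1.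
  move=> /asboolPn not_disc; apply: le_trans (test_gap_le_dTV C' J (Q i) C'_ne0 (pi i)) _.
  by apply/ltW; rewrite ltNge; apply/negP.
have := mean_le_threshold_mass mu_distr _ discerns 8^-1 gap_le1 gap_small.
under eq_bigr do rewrite mulrBr; rewrite sumrB; lra.
Qed.

Lemma discerning_mass_zero_code :
  (0 < n)%N -> (forall c, c \in C -> c = [ffun => false]) -> (2 * #|J| <= n)%N ->
  eps < 8^-1 -> C' \subset C -> C' != set0 ->
  9^-1 <= \sum_(i | discerns i) mu i.
Proof.
move=> n_gt0 C_zero J_half eps_lt C'C C'_ne0.
have [_ [_ [accept reject]]] := tester.
set x0 : word n := [ffun => false].
have C'E : C' = [set x0].
  apply/eqP; rewrite eqEsubset; apply/andP; split.
    by apply/subsetP => x /(subsetP C'C)/C_zero ->; rewrite set11.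
  case/set0Pn: C'_ne0 => y C'y; rewrite sub1set.
  by have := C_zero y (subsetP C'C y C'y); rewrite -/x0 => <-.
pose x1 : word n := [ffun j => j \notin J].
have x1_far : eps < dist R x1 C.
  apply: (lt_le_trans eps_lt); apply: dist_ge_inv8 => // c /C_zero ->.
  have -> : hamming x1 [ffun => false] = #|~: J|.
    by apply: eq_card => j; rewrite /x1 !inE !ffunE; case: (j \in J).
  have := cardsC J; rewrite card_ord; lia.
pose g i : R := (pi i (restrict (Q i) x0))%:R - (pi i (restrict (Q i) x1))%:R.
have g_le1 i : g i <= 1.
  have accept0_le1 : ((pi i (restrict (Q i) x0))%:R : R) <= 1 by rewrite lern1 leq_b1.
  have := ler0n R (pi i (restrict (Q i) x1)); rewrite /g; lra.
have g_nondisc i : ~~ discerns i -> g i <= 0.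
  move=> not_disc; have QJ : Q i \subset J.
    apply: contraNT not_disc => /(discerning_zero_code R) disc.
    by apply/asboolP; rewrite C'E.
  rewrite /g; suff -> : restrict (Q i) x1 = restrict (Q i) x0 by rewrite subrr.
  by apply/ffunP => j; rewrite !ffunE (subsetP QJ _ (valP j)).
have := mean_le_threshold_mass mu_distr g discerns 0 g_le1 g_nondisc.
under eq_bigr do rewrite mulrBr; rewrite sumrB !sum_mul_indicator.
have C'x0 : x0 \in C' by rewrite C'E set11.
have := accept x0 C'x0.
have := reject x1 x1_far; rewrite mass_predC //.
lra.
Qed.

End Tester.

Theorem lemma8 (R : realType) (n : nat) (C : {set word n}) (Gamma : nat)
  (eps : R) (C' : {set word n}) (q : nat) (I : finType) (Q : I -> {set 'I_n})
  (pi : forall i : I, subword (Q i) -> bool) (mu : I -> R) (J : {set 'I_n}) :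
  linear_code C ->
  dual_distance C Gamma ->
  (#|C| ^ 64 <= 2 ^ n)%N ->
  eps < 8^-1 ->
  C' \subset C ->
  C' != set0 ->
  @partial_tester R n C C' eps q I Q pi mu ->
  (2 * #|J| <= n)%N ->
  \sum_(i | `[< @discerning R n C' J (Q i) >]) mu i >= 9^-1.
Proof.
(* The dual distance only serves to provide a nonzero word, hence n > 0. *)
move=> [C0 _] [[y _ [y_ne0 _]] _] C64 eps_lt C'C C'_ne0 tester J_half.
have n_gt0 : (0 < n)%N.
  rewrite lt0n; apply: contra y_ne0 => /eqP n0; apply/eqP/ffunP => j.
  by have := ltn_ord j; rewrite [X in (_ < X)%N]n0.
have C_gt0 : (0 < #|C|)%N by apply/card_gt0P; exists [ffun => false].
have [n64 | n_lt64] := leqP 64 n.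
  exact: discerning_mass_large_length tester C_gt0 C64 J_half n64 eps_lt C'_ne0.
apply: (discerning_mass_zero_code tester n_gt0 _ J_half eps_lt C'C C'_ne0) => c Cc.
apply/eqP; apply: contraLR n_lt64 => c_ne0.
have C_ge2 : (2 <= #|C|)%N.
  have <- : #|[set c; [ffun => false]]| = 2%N by rewrite cards2 c_ne0.
  by apply/subset_leq_card/subsetP => x; rewrite !inE => /orP[] /eqP ->.
rewrite -leqNgt -(@leq_exp2l 2) //; apply: leq_trans C64.
by rewrite leq_exp2r.
Qed.
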